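(* Let $\tau>0$, $\mathcal C=C([-\tau,0];\mathbb R^n)$, and let $f:\mathcal C\to\mathbb R^n$, $g:\mathcal C\to\mathbb R^{n\times d}$ satisfy (A2): there are constants $p\ge2$, $\varrho>0$, $a_1,a_2,a_3>0$ with $a_2>a_3$ and $\rho_1\in\mathcal W$ such that for all $\phi\in\mathcal C$ $$2\phi(0)^Tf(\phi)+(p-1)|g(\phi)|^2\le a_1\Big(1+|\phi(0)|^2+\frac1\tau\int_{-\tau}^0|\phi(\theta)|^2\mathrm d\theta\Big)-a_2|\phi(0)|^{2+\varrho}+a_3\int_{-\tau}^0|\phi(\theta)|^{2+\varrho}\rho_1(\theta)\mathrm d\theta.$$ Let $\varepsilon_0\in(0,1)$ satisfy $\frac{a_2+a_3}{2}<a_2(1-\varepsilon_0)^{p/2}$, let $\kappa\in(0,1)$ satisfy $\frac{(a_2+a_3)(1+\kappa)}{2}<a_2(1-\varepsilon_0)^{p/2}$, let $\Phi(\phi)=1+(1-\varepsilon_0)|\phi(0)|^2+\frac{\varepsilon_0}{\tau}\int_{-\tau}^0|\phi(\theta)|^2\mathrm d\theta$, and set $$\alpha_1=\frac p2\Big(a_2(1-\varepsilon_0)^{p/2}-(1+\kappa)(1-\varepsilon_0)\Big(\frac{a_3(p-2)}{p+\varrho}+\frac{a_2-a_3}{2}\Big)\Big),\quad \alpha_2=\frac{p(1+\kappa)\varepsilon_0}{2}\Big(\frac{a_3(p-2)}{p+\varrho}+\frac{a_2-a_3}{2}\Big),\quad\alpha_3=\frac{a_3p(2+\varrho)}{2(p+\varrho)}.$$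 Then $0<\alpha_2+\alpha_3<\alpha_1$, and for every $c>0$ there is a constant $L>0$ such that for all $\phi\in\mathcal C$ $$c\,\Phi(\phi)^{p/2}+\frac{(1-\varepsilon_0)p}{2}\Phi(\phi)^{\frac{p-2}{2}}\big(2\phi(0)^Tf(\phi)+(p-1)|g(\phi)|^2\big)\le L-\alpha_1|\phi(0)|^{p+\varrho}+\frac{\alpha_2}{\tau}\int_{-\tau}^0|\phi(\theta)|^{p+\varrho}\mathrm d\theta+\alpha_3\int_{-\tau}^0|\phi(\theta)|^{p+\varrho}\rho_1(\theta)\mathrm d\theta.$$
   Context: $|\cdot|$ is the Euclidean norm on $\mathbb R^n$ and the trace (Frobenius) norm on $\mathbb R^{n\times d}$. $\mathcal W$ is the set of bounded Borel measurable functions $\rho:[-\tau,0]\to[0,\infty)$ with $\int_{-\tau}^0\rho(\theta)\mathrm d\theta=1$. *)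

From HB Require Import structures.
From mathcomp Require Import all_boot all_order all_algebra.
From mathcomp Require Import all_classical all_reals all_analysis.
Set Implicit Arguments. Unset Strict Implicit. Unset Printing Implicit Defensive.
Import Order.TTheory GRing.Theory Num.Theory.
Local Open Scope classical_set_scope.
Local Open Scope ring_scope.
Import numFieldNormedType.Exports.

Section Defs.
Variable R : realType.

Definition enorm (n : nat) (v : 'rV[R]_n) : R :=
  Num.sqrt (\sum_(i < n) v 0 i ^+ 2).

Definition fnorm (n d : nat) (A : 'M[R]_(n, d)) : R :=
  Num.sqrt (\sum_(i < n) \sum_(j < d) A i j ^+ 2).

Definition edot (n : nat) (u v : 'rV[R]_n) : R := \sum_(i < n) u 0 i * v 0 i.

Definition intT (tau : R) (h : R -> R) : R :=
  Rintegral (@lebesgue_measure R) `[- tau, 0]%classic h.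

(* Elements of C([-tau,0]; R^n), represented as functions on R that are
   continuous on [-tau,0] (only their values on [-tau,0] are used). *)
Definition is_C (n : nat) (tau : R) (phi : R -> 'rV[R]_n) : Prop :=
  {within (`[- tau, 0]%classic : set R), continuous phi}.

Definition in_W (tau : R) (rho : R -> R) : Prop :=
  [/\ measurable_fun `[- tau, 0]%classic rho,
      (exists M : R, forall t, - tau <= t <= 0 -> rho t <= M),
      (forall t, - tau <= t <= 0 -> 0 <= rho t) &
      intT tau rho = 1].

End Defs.

From HB Require Import structures.
From mathcomp Require Import all_boot all_order all_algebra.
From mathcomp Require Import all_classical all_reals all_analysis.
From mathcomp Require Import measurable_realfun.
From mathcomp Require Import ring lra.
Set Implicit Arguments. Unset Strict Implicit. Unset Printing Implicit Defensive.
Import Order.TTheory GRing.Theory Num.Theory.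
Local Open Scope classical_set_scope.
Local Open Scope ring_scope.
Import numFieldNormedType.Exports.

(* Write Q = Phi(phi) >= 1 and multiply (A2) by Q^((p-2)/2).  Since
   eps (1 - eps) (1 + |phi(0)|^2 + avg |phi|^2) <= Q, the a1-term is O(Q^(p/2)); since
   (1 - eps) |phi(0)|^2 <= Q, the a2-term is at most -(1-eps)^((p-2)/2) |phi(0)|^(p+varrho);
   Young's inequality splits Q^((p-2)/2) |phi|^(2+varrho) into Q^((p+varrho)/2) and
   |phi|^(p+varrho).  The lower power Q^(p/2) is absorbed, up to a constant, by a
   slightly larger multiple of Q^((p+varrho)/2) = (1 + m)^((p+varrho)/2), where m is the
   mean of |phi|^2 for the probability measure (1 - eps) delta_0 + (eps/tau) dtheta, and
   Jensen's inequality bounds m^((p+varrho)/2) by the mean of |phi|^(p+varrho). *)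

Section PowerInequalities.
Variable R : realType.
Implicit Types a b s t q m u y v e : R.

Lemma young_powR a b s t : 0 <= a -> 0 <= b -> 0 <= s -> 0 < t ->
  a `^ s * b `^ t <= s / (s + t) * a `^ (s + t) + t / (s + t) * b `^ (s + t).
Proof.
move=> a0 b0 s_ge0 t0; have [->|s_neq0] := eqVneq s 0.
  by rewrite powRr0 mul1r !add0r !mul0r add0r divff ?gt_eqF // mul1r.
have s0 : 0 < s by rewrite lt_neqAle eq_sym s_neq0.
have st0 : 0 < s + t by exact: addr_gt0.
have := conjugate_powR (powR_ge0 a s) (powR_ge0 b t)
  (divr_gt0 st0 s0) (divr_gt0 st0 t0).
rewrite -!powRrM !invf_div -mulrDl divff ?gt_eqF // => /(_ erefl).
rewrite [s * _]mulrCA [t * _]mulrCA !mulfV ?gt_eqF // !mulr1.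
by rewrite (mulrC (s / _)) (mulrC (t / _)).
Qed.

Lemma powR_tangent q m u : 1 <= q -> 0 <= m -> 0 <= u ->
  q * m `^ (q - 1) * u <= u `^ q + (q - 1) * m `^ q.
Proof.
move=> q1 m0 u0.
have q0 : 0 < q by lra.
have q1_ge0 : 0 <= q - 1 by rewrite subr_ge0.
have := ler_wpM2l (ltW q0) (young_powR m0 u0 q1_ge0 ltr01).
rewrite subrK powRr1 //.
have -> : q * ((q - 1) / q * m `^ q + 1 / q * u `^ q) = u `^ q + (q - 1) * m `^ q.
  by field; rewrite gt_eqF.
by rewrite mulrA.
Qed.

Lemma powR_le_dominated s q e : 0 <= s -> s < q -> 0 < e ->
  exists C, forall y, 0 <= y -> y `^ s <= e * y `^ q + C.
Proof.
move=> s0 sq e0; pose y0 := e^-1 `^ (q - s)^-1.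
exists (y0 `^ s) => y y0'.
have [yy0|y0y] := leP y y0.
  have : y `^ s <= y0 `^ s by apply: ge0_ler_powR; rewrite ?nnegrE ?powR_ge0.
  have : 0 <= e * y `^ q by rewrite mulr_ge0 ?powR_ge0 ?ltW.
  lra.
have y_gt0 : 0 < y by apply: le_lt_trans y0y; exact: powR_ge0.
have e_le : e^-1 <= y `^ (q - s).
  have -> : e^-1 = y0 `^ (q - s).
    by rewrite -powRrM mulVf ?powRr1 ?invr_ge0 ?ltW // gt_eqF // subr_gt0.
  by apply: ge0_ler_powR; rewrite ?nnegrE ?powR_ge0 //; lra.
have -> : y `^ q = y `^ s * y `^ (q - s).
  by rewrite -powRD ?subrKC // (gt_eqF y_gt0) implybT.
have : y `^ s <= e * (y `^ s * y `^ (q - s)).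
  rewrite mulrCA ler_peMr ?powR_ge0 // -(mulfV (lt0r_neq0 e0)).
  by rewrite ler_pM2l.
have : 0 <= y0 `^ s by exact: powR_ge0.
lra.
Qed.

Lemma powR_1D_le q b : 0 < q -> 1 < b ->
  exists C, forall v, 0 <= v -> (1 + v) `^ q <= b * v `^ q + C.
Proof.
move=> q0 b1; pose k := b `^ q^-1.
have k1 : 1 < k.
  have <- : 1 `^ q^-1 = 1 :> R by rewrite powR1.
  by apply: gt0_ltr_powR; rewrite ?invr_gt0 ?nnegrE //; lra.
pose v0 := (k - 1)^-1.
have v0_gt0 : 0 < v0 by rewrite invr_gt0 subr_gt0.
exists ((1 + v0) `^ q) => v v_ge0.
have [vv0|v0v] := leP v v0.
  have : (1 + v) `^ q <= (1 + v0) `^ q.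
    by apply: ge0_ler_powR; rewrite ?nnegrE; lra.
  have : 0 <= b * v `^ q by rewrite mulr_ge0 ?powR_ge0 //; lra.
  lra.
have kv : 1 <= (k - 1) * v.
  have k1_gt0 : 0 < k - 1 by rewrite subr_gt0.
  have : (k - 1) * v0 <= (k - 1) * v by rewrite ler_pM2l // ltW.
  by rewrite /v0 mulfV // lt0r_neq0.
have : (1 + v) `^ q <= (k * v) `^ q.
  by apply: ge0_ler_powR; rewrite ?nnegrE; lra.
rewrite powRM; [|lra|lra].
rewrite /k -powRrM mulVf ?gt_eqF // powRr1; last lra.
have : 0 <= (1 + v0) `^ q by exact: powR_ge0.
lra.
Qed.

Lemma mulr_powR_half q p : 0 <= q -> 0 < p -> q * q `^ ((p - 2) / 2) = q `^ (p / 2).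
Proof.
move=> q0 p0; have -> : (p - 2) / 2 = p / 2 - 1 by field.
by rewrite mulr_powRB1 // divr_gt0.
Qed.

End PowerInequalities.

Section SegmentIntegral.
Variables (R : realType) (tau : R).
Hypothesis tau_gt0 : 0 < tau.
Local Notation D := (`[- tau, 0]%classic : set R).
Local Notation integrable h := ((@lebesgue_measure R).-integrable D (EFin \o h)).

Implicit Types (a c eps q M : R) (h u : R -> R).

Lemma bounded_integrable h M : measurable_fun D h ->
  (forall t, D t -> `|h t| <= M) -> integrable h.
Proof.
move=> mh hM; apply: measurable_bounded_integrable => //.
- exact/compact_finite_measure/segment_compact.
- exists M; split; rewrite ?num_real // => M' MM' t Dt /=.
  exact: le_trans (hM t Dt) (ltW MM').
Qed.

Lemma integrable_cst c : integrable (fun=> c).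
Proof. by apply: (@bounded_integrable _ `|c|) => //; exact: measurable_cst. Qed.

Lemma integrableZ_EFin a g : integrable g -> integrable (fun t => a * g t).
Proof.
move=> ig; apply: (eq_integrable _ (fun t => (a%:E * (EFin \o g) t)%E)).
- exact: measurable_itv.
- by move=> t _; rewrite /= EFinM.
- by apply: integrableZl => //; exact: measurable_itv.
Qed.

Lemma integrableD_EFin g1 g2 : integrable g1 -> integrable g2 ->
  integrable (fun t => g1 t + g2 t).
Proof.
move=> i1 i2; apply: (eq_integrable _ ((EFin \o g1) \+ (EFin \o g2))%E).
- exact: measurable_itv.
- by move=> t _; rewrite /= EFinD.
- by apply: integrableD => //; exact: measurable_itv.
Qed.

Lemma intTZ a (g : R -> R) : integrable g -> intT tau (fun t => a * g t) = a * intT tau g.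
Proof. by move=> ig; rewrite /intT RintegralZl //; exact: measurable_itv. Qed.

Lemma intTD (g1 g2 : R -> R) : integrable g1 -> integrable g2 ->
  intT tau (fun t => g1 t + g2 t) = intT tau g1 + intT tau g2.
Proof. by move=> i1 i2; rewrite /intT RintegralD //; exact: measurable_itv. Qed.

Lemma le_intT (g1 g2 : R -> R) : integrable g1 -> integrable g2 ->
  (forall t, D t -> g1 t <= g2 t) -> intT tau g1 <= intT tau g2.
Proof. by move=> i1 i2 le12; apply: le_Rintegral => //; exact: measurable_itv. Qed.

Lemma intT_ge0 (g : R -> R) : (forall t, D t -> 0 <= g t) -> 0 <= intT tau g.
Proof. by move=> g0; apply: Rintegral_ge0. Qed.

Lemma intT_cst c : intT tau (fun=> c) = c * tau.
Proof.
rewrite /intT Rintegral_cst; last exact: measurable_itv.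
have /= -> := lebesgue_measure_itv `[- tau, 0]%R.
by rewrite lte_fin oppr_lt0 tau_gt0 /= sub0r opprK.
Qed.

Lemma in_W_ge0 rho : in_W tau rho -> forall t, D t -> 0 <= rho t.
Proof. by case=> _ _ rho0 _ t; rewrite /= in_itv; exact: rho0. Qed.

Lemma integrable_density rho : in_W tau rho -> integrable rho.
Proof.
move=> rhoW; have [mrho [M HM] _ _] := rhoW.
apply: (bounded_integrable (M := M)) => // t Dt.
by rewrite ger0_norm ?(in_W_ge0 rhoW) //; apply: HM; move: Dt; rewrite /= in_itv.
Qed.

Lemma mem_segment0 : D 0.
Proof. by rewrite /= in_itv /= oppr_le0 lexx ltW. Qed.

(* The mean of [u] for the probability measure (1 - eps) delta_0 + (eps / tau) dt
   on [-tau, 0]; [Phi phi] is [1 + mix_mean eps (fun t => enorm (phi t) ^+ 2)]. *)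
Definition mix_mean (eps : R) (u : R -> R) :=
  (1 - eps) * u 0 + eps / tau * intT tau u.

Lemma mix_mean_ge0 eps u : 0 <= eps <= 1 -> (forall t, D t -> 0 <= u t) ->
  0 <= mix_mean eps u.
Proof.
move=> /andP[e0 e1] u0; apply: addr_ge0; apply: mulr_ge0.
- by rewrite subr_ge0.
- exact/u0/mem_segment0.
- by rewrite divr_ge0 // ltW.
- exact: intT_ge0.
Qed.

Lemma mix_mean_powR_le eps q u : 0 <= eps <= 1 -> 1 <= q ->
  (forall t, D t -> 0 <= u t) -> integrable u -> integrable (fun t => u t `^ q) ->
  mix_mean eps u `^ q <= mix_mean eps (fun t => u t `^ q).
Proof.
move=> eps01 q1 u0 iu iuq; have /andP[e0 e1] := eps01.
set m := mix_mean eps u; have m0 : 0 <= m by exact: mix_mean_ge0.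
(* Average the tangent-line inequality of [y `^ q] at [m]. *)
pose P := m `^ (q - 1).
have at0 : q * P * u 0 <= u 0 `^ q + (q - 1) * m `^ q.
  exact/powR_tangent/u0/mem_segment0.
have on_avg : q * P * intT tau u <= intT tau (fun t => u t `^ q) + (q - 1) * m `^ q * tau.
  rewrite -intTZ // -intT_cst -intTD ?integrable_cst //.
  apply: le_intT => [||t Dt]; first exact: integrableZ_EFin.
    exact: integrableD_EFin iuq (integrable_cst _).
  exact/powR_tangent/u0.
have mq : m `^ q = m * P by rewrite /P mulr_powRB1 //; lra.
have h0 := ler_wpM2l (eqbRL (subr_ge0 _ _) e1) at0.
have h1 := ler_wpM2l (divr_ge0 e0 (ltW tau_gt0)) on_avg.
have e_cancel : eps / tau * (q - 1) * m `^ q * tau = eps * ((q - 1) * m `^ q).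
  by field; rewrite gt_eqF.
have : q * P * m <= mix_mean eps (fun t => u t `^ q) + (q - 1) * m `^ q.
  have -> : q * P * m = (1 - eps) * (q * P * u 0) + eps / tau * (q * P * intT tau u).
    by rewrite /m /mix_mean; ring.
  rewrite /mix_mean; lra.
rewrite mq; lra.
Qed.

End SegmentIntegral.

Section ContinuousPath.
Variables (R : realType) (n : nat) (tau : R) (phi : R -> 'rV[R]_n).
Hypothesis phiC : is_C tau phi.
Local Notation D := (`[- tau, 0]%classic : set R).
Local Notation integrable h := ((@lebesgue_measure R).-integrable D (EFin \o h)).

Lemma enorm_ge0 (v : 'rV[R]_n) : 0 <= enorm v.
Proof. exact: sqrtr_ge0. Qed.

Lemma continuous_enorm : continuous (@enorm R n).
Proof.
have sum_cont (s : seq 'I_n) :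
    continuous (fun v : 'rV[R]_n => \sum_(i <- s) v 0 i ^+ 2).
  elim: s => [|i s IH].
    by under eq_fun do rewrite big_nil; exact: cst_continuous.
  under eq_fun do rewrite big_cons.
  move=> x; apply: (@continuousD R R^o _ (fun w : 'rV[R]_n => w 0 i ^+ 2) _ x _ (IH x)).
  exact: continuous_comp (@coord_continuous R 1 n 0 i x) (@exprn_continuous R 2 _).
by move=> v; exact: continuous_comp (sum_cont _ v) (@sqrt_continuous R _).
Qed.

Lemma continuous_path_enorm : {within D, continuous (fun t => enorm (phi t))}.
Proof. by move=> t; apply: continuous_comp; [exact: phiC | exact: continuous_enorm]. Qed.

Lemma measurable_path_enorm : measurable_fun D (fun t => enorm (phi t)).
Proof.
apply: subspace_continuous_measurable_fun continuous_path_enorm.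
exact: measurable_itv.
Qed.

Lemma bounded_path_enorm : exists M, forall t, D t -> enorm (phi t) <= M.
Proof.
have /compact_bounded[M [_ HM]] :=
  continuous_compact continuous_path_enorm (@segment_compact R (- tau) 0).
exists (M + 1) => t Dt; apply: le_trans (ler_norm _) _.
by apply: (HM (M + 1)); [rewrite ltrDl | exists t].
Qed.

Lemma integrable_enorm_powR k : 0 <= k -> integrable (fun t => enorm (phi t) `^ k).
Proof.
move=> k0; have [M HM] := bounded_path_enorm.
apply: (bounded_integrable (M := M `^ k)).
  exact: (measurableT_comp (measurable_powR _) measurable_path_enorm).
move=> t Dt; rewrite ger0_norm ?powR_ge0 //.
by apply: ge0_ler_powR; rewrite ?nnegrE ?enorm_ge0 ?HM //; exact: le_trans (enorm_ge0 _) (HM t Dt).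
Qed.

Lemma integrable_enorm_sqr : integrable (fun t => enorm (phi t) ^+ 2).
Proof.
have -> : (fun t => enorm (phi t) ^+ 2) = (fun t => enorm (phi t) `^ 2%:R).
  by apply/funext => t; rewrite powR_mulrn ?enorm_ge0.
exact: integrable_enorm_powR.
Qed.

Lemma integrable_enorm_powR_density rho k : in_W tau rho -> 0 <= k ->
  integrable (fun t => enorm (phi t) `^ k * rho t).
Proof.
move=> rhoW k0; have [mrho [Mrho HMrho] _ _] := rhoW.
have [M HM] := bounded_path_enorm.
apply: (bounded_integrable (M := M `^ k * Mrho)).
  apply: measurable_funM => //.
  exact: (measurableT_comp (measurable_powR _) measurable_path_enorm).
move=> t Dt; have rho0 := in_W_ge0 rhoW Dt.
have Dt' : - tau <= t <= 0 by move: Dt; rewrite /= in_itv.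
rewrite ger0_norm ?mulr_ge0 ?powR_ge0 //.
apply: ler_pM; rewrite ?powR_ge0 ?HMrho //.
by apply: ge0_ler_powR; rewrite ?nnegrE ?enorm_ge0 ?HM //; exact: le_trans (enorm_ge0 _) (HM t Dt).
Qed.

End ContinuousPath.

Section DriftEstimate.
Variables (R : realType) (n : nat) (tau p r eps : R) (rho : R -> R).
Hypotheses (tau_gt0 : 0 < tau) (p_ge2 : 2 <= p) (r_gt0 : 0 < r).
Hypotheses (eps_gt0 : 0 < eps) (eps_lt1 : eps < 1) (rhoW : in_W tau rho).
Local Notation Phi phi := (1 + (1 - eps) * enorm (phi 0) ^+ 2
  + eps / tau * intT tau (fun t => enorm (phi t) ^+ 2)).
Implicit Types (phi : R -> 'rV[R]_n) (Q Z Dd G : R).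

Let p_gt0 : 0 < p.
Proof. by apply: lt_le_trans p_ge2. Qed.

Let pr_gt0 : 0 < p + r.
Proof. exact: addr_gt0. Qed.

Let eps01 : 0 <= eps <= 1.
Proof. by rewrite !ltW. Qed.

Let subr1_eps_ge0 : 0 <= 1 - eps.
Proof. by rewrite subr_ge0 ltW. Qed.

Let sqr_enorm_ge0 phi t : 0 <= enorm (phi t) ^+ 2.
Proof. exact/exprn_ge0/enorm_ge0. Qed.

Let sqr0_ge0 phi : 0 <= (1 - eps) * enorm (phi 0) ^+ 2.
Proof. exact: mulr_ge0. Qed.

Let intT_sqr_ge0 phi : 0 <= eps / tau * intT tau (fun t => enorm (phi t) ^+ 2).
Proof. by apply: mulr_ge0; [rewrite divr_ge0 // ltW | exact: intT_ge0]. Qed.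

Lemma Phi_ge1 phi : 1 <= Phi phi.
Proof. by have := intT_sqr_ge0 phi; have := sqr0_ge0 phi; lra. Qed.

Lemma growth_le_Phi phi :
  Phi phi `^ ((p - 2) / 2) *
    (1 + enorm (phi 0) ^+ 2 + tau^-1 * intT tau (fun t => enorm (phi t) ^+ 2))
  <= (eps * (1 - eps))^-1 * Phi phi `^ (p / 2).
Proof.
have Q1 := Phi_ge1 phi; set Q := Phi phi in Q1 *.
have epsc_gt0 : 0 < eps * (1 - eps) by rewrite mulr_gt0 // subr_gt0.
set y := enorm (phi 0) ^+ 2; set z := tau^-1 * intT tau _.
have y0 : 0 <= y by exact: sqr_enorm_ge0.
have z0 : 0 <= z by apply: mulr_ge0; [rewrite invr_ge0 ltW | exact: intT_ge0].
have : eps * (1 - eps) * (1 + y + z) <= Q.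
  have -> : Q = 1 + (1 - eps) * y + eps * z by rewrite /Q /y /z; ring.
  have : 0 <= (1 - eps) * y by rewrite mulr_ge0 // subr_ge0 ltW.
  have : 0 <= eps * z by rewrite mulr_ge0 // ltW.
  nra.
rewrite -ler_pdivlMl // => /(ler_wpM2l (powR_ge0 Q ((p - 2) / 2))) /le_trans.
by apply; rewrite mulrCA [_ `^ _ * Q]mulrC mulr_powR_half // (le_trans ler01 Q1).
Qed.

Lemma enorm0_powR_le_Phi phi :
  (1 - eps) `^ ((p - 2) / 2) * enorm (phi 0) `^ (p + r)
  <= Phi phi `^ ((p - 2) / 2) * enorm (phi 0) `^ (2 + r).
Proof.
have x0 : 0 <= enorm (phi 0) := enorm_ge0 _.
have : ((1 - eps) * enorm (phi 0) ^+ 2) `^ ((p - 2) / 2) <= Phi phi `^ ((p - 2) / 2).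
  apply: ge0_ler_powR; rewrite ?nnegrE.
  - by rewrite divr_ge0 // subr_ge0.
  - exact: sqr0_ge0.
  - exact: le_trans ler01 (Phi_ge1 phi).
  - by have := intT_sqr_ge0 phi; lra.
rewrite powRM ?exprn_ge0 // -powR_mulrn // -powRrM.
have -> : 2%:R * ((p - 2) / 2) = p - 2 by field.
have -> : enorm (phi 0) `^ (p + r) = enorm (phi 0) `^ (p - 2) * enorm (phi 0) `^ (2 + r).
  rewrite -powRD; first by congr (_ `^ _); ring.
  by rewrite addrA subrK gt_eqF // addr_gt0.
by rewrite mulrA; apply: ler_wpM2r; exact: powR_ge0.
Qed.

Lemma intT_young_density phi Q : is_C tau phi ->
  Q `^ ((p - 2) / 2) * intT tau (fun t => enorm (phi t) `^ (2 + r) * rho t)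
  <= (p - 2) / (p + r) * Q `^ ((p + r) / 2)
     + (2 + r) / (p + r) * intT tau (fun t => enorm (phi t) `^ (p + r) * rho t).
Proof.
move=> phiC; have r2_gt0 : 0 < 2 + r by rewrite addr_gt0.
have young y : 0 <= y -> Q `^ ((p - 2) / 2) * y `^ (2 + r)
    <= (p - 2) / (p + r) * Q `^ ((p + r) / 2) + (2 + r) / (p + r) * y `^ (p + r).
  move=> y0; have p2 : 0 <= p - 2 by rewrite subr_ge0.
  have := young_powR (powR_ge0 Q 2^-1) y0 p2 r2_gt0.
  rewrite -!powRrM (_ : p - 2 + (2 + r) = p + r); last by ring.
  by rewrite !(mulrC 2^-1).
have i1 := integrable_enorm_powR_density phiC rhoW (ltW r2_gt0).
have i2 := integrable_enorm_powR_density phiC rhoW (ltW pr_gt0).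
have [_ _ _ rho1] := rhoW.
have -> : (p - 2) / (p + r) * Q `^ ((p + r) / 2) =
    intT tau (fun t => (p - 2) / (p + r) * Q `^ ((p + r) / 2) * rho t).
  by rewrite intTZ ?rho1 ?mulr1 //; exact: integrable_density.
have irho := integrable_density rhoW.
rewrite -!intTZ // -intTD; [|exact: integrableZ_EFin|exact: integrableZ_EFin].
apply: le_intT => [||t Dt]; first exact: integrableZ_EFin.
  by apply: integrableD_EFin; exact: integrableZ_EFin.
rewrite mulrA [_ / _ * (_ * rho t)]mulrA -mulrDl.
by apply: ler_wpM2r; [exact: (in_W_ge0 rhoW) | exact/young/enorm_ge0].
Qed.

Lemma mix_mean_sqr_powR_le phi : is_C tau phi ->
  mix_mean tau eps (fun t => enorm (phi t) ^+ 2) `^ ((p + r) / 2)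
  <= mix_mean tau eps (fun t => enorm (phi t) `^ (p + r)).
Proof.
move=> phiC.
have pow_sqr : (fun t => (enorm (phi t) ^+ 2) `^ ((p + r) / 2))
    = (fun t => enorm (phi t) `^ (p + r)).
  apply/funext => t; rewrite -powR_mulrn ?enorm_ge0 // -powRrM.
  by congr (_ `^ _); field.
rewrite -pow_sqr; apply: mix_mean_powR_le => //.
- by rewrite ler_pdivlMr // mul1r; move: p_ge2 r_gt0; lra.
- exact: integrable_enorm_sqr.
- by rewrite pow_sqr; exact: integrable_enorm_powR (ltW pr_gt0).
Qed.

Lemma Phi_powR_absorb Z Dd G : 0 < Z -> 0 <= Dd -> Dd < G ->
  exists C : R, forall phi, is_C tau phi ->
    Z * Phi phi `^ (p / 2) + Dd * Phi phi `^ ((p + r) / 2)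
    <= G * mix_mean tau eps (fun t => enorm (phi t) `^ (p + r)) + C.
Proof.
move=> Z0 Dd0 DdG; pose e := (G - Dd) / 2.
have e0 : 0 < e by rewrite divr_gt0 // subr_gt0.
have De0 : 0 < Dd + e by exact: ltr_wpDl.
have [C1 HC1] : exists C : R, forall y, 0 <= y ->
    y `^ (p / 2) <= e / Z * y `^ ((p + r) / 2) + C.
  apply: powR_le_dominated; first by rewrite divr_ge0 // ltW.
    by rewrite ltr_pM2r ?invr_gt0 // ltrDl.
  exact: divr_gt0.
have [C2 HC2] : exists C : R, forall v, 0 <= v ->
    (1 + v) `^ ((p + r) / 2) <= G / (Dd + e) * v `^ ((p + r) / 2) + C.
  apply: powR_1D_le; first by rewrite divr_gt0 // addr_gt0.
  by rewrite ltr_pdivlMr // mul1r -ltrBrDl /e ltr_pdivrMr //; lra.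
exists (Z * C1 + (Dd + e) * C2) => phi phiC.
have m0 := mix_mean_ge0 tau_gt0 eps01 (fun t _ => sqr_enorm_ge0 phi t).
have h1 := ler_wpM2l (ltW Z0) (HC1 _ (le_trans ler01 (Phi_ge1 phi))).
have h2 := ler_wpM2l (ltW De0) (HC2 _ m0); rewrite addrA in h2.
have h3 := ler_wpM2l (ltW (le_lt_trans Dd0 DdG)) (mix_mean_sqr_powR_le phiC).
have cancel (k a y c : R) : 0 < k -> k * (a / k * y + c) = a * y + k * c.
  by move=> k0; field; rewrite gt_eqF.
rewrite cancel // in h1; rewrite cancel // in h2.
rewrite /e in h1 h2 *; lra.
Qed.

Lemma drift_powR_le phi (a1 a2 a3 h : R) : is_C tau phi ->
  0 <= a1 -> 0 <= a2 -> 0 <= a3 ->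
  h <= a1 * (1 + enorm (phi 0) ^+ 2 + tau^-1 * intT tau (fun t => enorm (phi t) ^+ 2))
       - a2 * enorm (phi 0) `^ (2 + r)
       + a3 * intT tau (fun t => enorm (phi t) `^ (2 + r) * rho t) ->
  Phi phi `^ ((p - 2) / 2) * h
  <= a1 * (eps * (1 - eps))^-1 * Phi phi `^ (p / 2)
     - a2 * (1 - eps) `^ ((p - 2) / 2) * enorm (phi 0) `^ (p + r)
     + a3 * ((p - 2) / (p + r) * Phi phi `^ ((p + r) / 2)
       + (2 + r) / (p + r) * intT tau (fun t => enorm (phi t) `^ (p + r) * rho t)).
Proof.
move=> phiC a1_ge0 a2_ge0 a3_ge0 hle.
have := ler_wpM2l (powR_ge0 (Phi phi) ((p - 2) / 2)) hle.
have := ler_wpM2l a1_ge0 (growth_le_Phi phi).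
have := ler_wpM2l a2_ge0 (enorm0_powR_le_Phi phi).
have := ler_wpM2l a3_ge0 (intT_young_density (Phi phi) phiC).
lra.
Qed.

End DriftEstimate.

Section DriftConstants.
Variables (R : realType) (p r a2 a3 eps kappa : R).
Hypotheses (p_ge2 : 2 <= p) (r_gt0 : 0 < r) (a3_gt0 : 0 < a3) (a3_lt_a2 : a3 < a2).
Hypotheses (eps_gt0 : 0 < eps) (eps_lt1 : eps < 1) (kappa_gt0 : 0 < kappa).

Let p_gt0 : 0 < p.
Proof. exact: lt_le_trans p_ge2. Qed.

Let pr_gt0 : 0 < p + r.
Proof. exact: addr_gt0. Qed.

Let A := a3 * (p - 2) / (p + r).
Let S := A + (a2 - a3) / 2.

Let A_ge0 : 0 <= A.
Proof. by rewrite /A !mulr_ge0 ?invr_ge0 ?subr_ge0 // ltW. Qed.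

Lemma young_weight_ge0 : 0 <= (1 - eps) * p / 2 * a3 * ((p - 2) / (p + r)).
Proof.
have -> : (1 - eps) * p / 2 * a3 * ((p - 2) / (p + r)) = (1 - eps) * p / 2 * A.
  by rewrite /A; ring.
apply: mulr_ge0 _ A_ge0; apply: divr_ge0 => //.
by apply: mulr_ge0; [rewrite subr_ge0 ltW | exact: ltW].
Qed.

Lemma young_weight_density_le :
  (1 - eps) * p / 2 * (a3 * ((2 + r) / (p + r))) <= a3 * p * (2 + r) / (2 * (p + r)).
Proof.
have -> : a3 * p * (2 + r) / (2 * (p + r)) = p / 2 * (a3 * ((2 + r) / (p + r))).
  by field; rewrite gt_eqF.
apply: ler_wpM2r; first by rewrite ltW // mulr_gt0 // divr_gt0 // addr_gt0.
by have := mulr_gt0 eps_gt0 p_gt0; lra.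
Qed.

Lemma young_weight_lt :
  (1 - eps) * p / 2 * a3 * ((p - 2) / (p + r)) < p / 2 * (1 + kappa) * S.
Proof.
have -> : (1 - eps) * p / 2 * a3 * ((p - 2) / (p + r)) = p / 2 * ((1 - eps) * A).
  by rewrite /A; ring.
have -> : p / 2 * (1 + kappa) * S = p / 2 * ((1 + kappa) * S) by ring.
rewrite ltr_pM2l; last exact: divr_gt0.
have d_gt0 : 0 < (a2 - a3) / 2 by rewrite divr_gt0 // subr_gt0.
have := mulr_ge0 (ltW eps_gt0) A_ge0; have := mulr_ge0 (ltW kappa_gt0) A_ge0.
have := mulr_gt0 kappa_gt0 d_gt0; rewrite /S; lra.
Qed.

Lemma alpha_gap w : (a2 + a3) * (1 + kappa) / 2 < a2 * w ->
  let alpha1 := p / 2 * (a2 * w - (1 + kappa) * (1 - eps) * S) in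
  let alpha2 := p * (1 + kappa) * eps / 2 * S in
  let alpha3 := a3 * p * (2 + r) / (2 * (p + r)) in
  0 < alpha2 + alpha3 /\ alpha2 + alpha3 < alpha1.
Proof.
move=> hw alpha1 alpha2 alpha3.
pose X := a3 * (2 + r) / (p + r).
have X_gt0 : 0 < X by rewrite divr_gt0 // mulr_gt0 // addr_gt0.
have S_gt0 : 0 < S by rewrite ltr_wpDl ?A_ge0 // divr_gt0 // subr_gt0.
have SX : S + X = (a2 + a3) / 2 by rewrite /S /A /X; field; rewrite gt_eqF.
have -> : alpha2 + alpha3 = p / 2 * ((1 + kappa) * eps * S + X).
  by rewrite /alpha2 /alpha3 /X; field; rewrite gt_eqF.
have -> : alpha1 = p / 2 * (a2 * w - (1 + kappa) * (1 - eps) * S) by [].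
have p2_gt0 : 0 < p / 2 by exact: divr_gt0.
split; first by rewrite mulr_gt0 // ltr_wpDl // ltW // !mulr_gt0 // addr_gt0.
rewrite ltr_pM2l //.
have kSX : kappa * (S + X) = kappa * ((a2 + a3) / 2) by rewrite SX.
have := mulr_gt0 kappa_gt0 X_gt0; lra.
Qed.

End DriftConstants.

Theorem lemma3p2 (R : realType) (n d : nat) (tau : R)
  (f : (R -> 'rV[R]_n) -> 'rV[R]_n) (g : (R -> 'rV[R]_n) -> 'M[R]_(n, d))
  (p varrho a1 a2 a3 : R) (rho1 : R -> R) (eps0 kappa : R) :
  0 < tau ->
  2 <= p -> 0 < varrho -> 0 < a1 -> 0 < a2 -> 0 < a3 -> a3 < a2 ->
  in_W tau rho1 ->
  (forall phi : R -> 'rV[R]_n, is_C tau phi ->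
     2 * edot (phi 0) (f phi) + (p - 1) * fnorm (g phi) ^+ 2
     <= a1 * (1 + enorm (phi 0) ^+ 2 + tau^-1 * intT tau (fun t => enorm (phi t) ^+ 2))
        - a2 * (enorm (phi 0) `^ (2 + varrho))
        + a3 * intT tau (fun t => enorm (phi t) `^ (2 + varrho) * rho1 t)) ->
  0 < eps0 < 1 ->
  (a2 + a3) / 2 < a2 * (1 - eps0) `^ (p / 2) ->
  0 < kappa < 1 ->
  (a2 + a3) * (1 + kappa) / 2 < a2 * (1 - eps0) `^ (p / 2) ->
  let Phi := fun phi : R -> 'rV[R]_n =>
    1 + (1 - eps0) * enorm (phi 0) ^+ 2
      + eps0 / tau * intT tau (fun t => enorm (phi t) ^+ 2) in
  let alpha1 := p / 2 * (a2 * (1 - eps0) `^ (p / 2)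
      - (1 + kappa) * (1 - eps0) * (a3 * (p - 2) / (p + varrho) + (a2 - a3) / 2)) in
  let alpha2 := p * (1 + kappa) * eps0 / 2 *
      (a3 * (p - 2) / (p + varrho) + (a2 - a3) / 2) in
  let alpha3 := a3 * p * (2 + varrho) / (2 * (p + varrho)) in
  (0 < alpha2 + alpha3 /\ alpha2 + alpha3 < alpha1) /\
  forall c : R, 0 < c -> exists L : R, 0 < L /\
    forall phi : R -> 'rV[R]_n, is_C tau phi ->
      c * Phi phi `^ (p / 2)
      + (1 - eps0) * p / 2 * Phi phi `^ ((p - 2) / 2)
          * (2 * edot (phi 0) (f phi) + (p - 1) * fnorm (g phi) ^+ 2)
      <= L - alpha1 * enorm (phi 0) `^ (p + varrho)
         + alpha2 / tau * intT tau (fun t => enorm (phi t) `^ (p + varrho))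
         + alpha3 * intT tau (fun t => enorm (phi t) `^ (p + varrho) * rho1 t).
Proof.
move=> tau_gt0 p_ge2 r_gt0 a1_gt0 a2_gt0 a3_gt0 a3_lt_a2 rhoW hypA.
move=> /andP[eps_gt0 eps_lt1] _ /andP[kappa_gt0 _] hkappa Phi alpha1 alpha2 alpha3.
split; first exact: alpha_gap.
move=> c c_gt0.
have p_gt0 : 0 < p by apply: lt_le_trans p_ge2.
have eps1_gt0 : 0 < 1 - eps0 by rewrite subr_gt0.
have E_ge0 : 0 <= (1 - eps0) * p / 2 by rewrite ltW // !mulr_gt0.
have Z_gt0 : 0 < c + (1 - eps0) * p / 2 * a1 * (eps0 * (1 - eps0))^-1.
  by apply: ltr_wpDr c_gt0; rewrite ltW // !mulr_gt0 // invr_gt0 mulr_gt0.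
have [C HC] := Phi_powR_absorb n tau_gt0 p_ge2 r_gt0 eps_gt0 eps_lt1 Z_gt0
  (young_weight_ge0 p_ge2 r_gt0 a3_gt0 eps_lt1)
  (young_weight_lt p_ge2 r_gt0 a3_gt0 a3_lt_a2 eps_gt0 kappa_gt0).
exists (Num.max 1 C); split => [|phi phiC]; first by rewrite lt_max ltr01.
have := ler_wpM2l E_ge0 (drift_powR_le tau_gt0 p_ge2 r_gt0 eps_gt0 eps_lt1 rhoW
  phiC (ltW a1_gt0) (ltW a2_gt0) (ltW a3_gt0) (hypA phi phiC)).
have := HC phi phiC.
have Jr_ge0 : 0 <= intT tau (fun t => enorm (phi t) `^ (p + varrho) * rho1 t).
  by apply: intT_ge0 => t Dt; rewrite mulr_ge0 ?powR_ge0 // (in_W_ge0 rhoW).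
have := ler_wpM2r Jr_ge0 (young_weight_density_le p_ge2 r_gt0 a3_gt0 eps_gt0).
have : C <= Num.max 1 C by rewrite le_max lexx orbT.
(* With G := p/2 (1 + kappa) S from [young_weight_lt],
   alpha1 = p/2 a2 (1 - eps0)^(p/2) - (1 - eps0) G and alpha2 = eps0 G. *)
rewrite /Phi /alpha1 /alpha2 /alpha3 /mix_mean -(mulr_powR_half (ltW eps1_gt0) p_gt0); lra.
Qed.
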